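(* Let $\mathcal{G}$ be a connected simple undirected graph on $N$ nodes, $G=(D+I_N)^{-1}(A+I_N)$, $T>0$ and $g<0$. Let $\Gamma=e^{gT}I_N-(e^{gT}-1)G$. Then every eigenvalue $\mu$ of $\Gamma$ is real and satisfies $-1<\mu\le 1$, $\mu=1$ is an eigenvalue of algebraic multiplicity one, and $\Gamma\mathbf{1}_N=\mathbf{1}_N$. Moreover, every solution of $\dot x(t)=gx(t)-gGx(kT)$ for $t\in[kT,(k+1)T)$, $k=0,1,2,\dots$ (with $x$ continuous) satisfies $x((k+1)T)=\Gamma x(kT)$ for all $k\ge 0$.
   Context: $A$ is the adjacency matrix and $D$ the degree matrix of the graph; $\mathbf{1}_N$ is the all-ones vector. *)

From HB Require Import structures.
From mathcomp Require Import all_boot all_order all_algebra.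
From Stdlib Require Import Reals Lra ClassicalEpsilon FunctionalExtensionality PropExtensionality.

Set Implicit Arguments.
Unset Strict Implicit.
Unset Printing Implicit Defensive.

Definition cfind (T : Type) (P : pred T) (n : nat) : option T :=
  match excluded_middle_informative (exists x, P x) with
  | left h => Some (proj1_sig (constructive_indefinite_description _ h))
  | right _ => None
  end.

Lemma cfind_correct (T : Type) (P : pred T) n x : cfind P n = Some x -> P x.
Proof.
rewrite /cfind; case: excluded_middle_informative => // h [<-].
exact: proj2_sig (constructive_indefinite_description _ h).
Qed.

Lemma cfind_complete (T : Type) (P : pred T) : (exists x, P x) -> exists n, cfind P n.
Proof.
move=> h; exists 0%N; rewrite /cfind; case: excluded_middle_informative => //.
Qed.

Lemma cfind_ext (T : Type) (P Q : pred T) : P =1 Q -> cfind P =1 cfind Q.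
Proof. by move=> /functional_extensionality ->. Qed.

Definition Reqb (x y : R) : bool := if Req_EM_T x y then true else false.
Lemma ReqP : Equality.axiom Reqb.
Proof. by move=> x y; rewrite /Reqb; case: Req_EM_T => h; constructor. Qed.

HB.instance Definition _ := hasDecEq.Build R ReqP.
HB.instance Definition _ := hasChoice.Build R (@cfind_correct R) (@cfind_complete R) (@cfind_ext R).

Lemma R_addrA : associative Rplus. Proof. move=> *; ring. Qed.
Lemma R_addrC : commutative Rplus. Proof. move=> *; ring. Qed.
Lemma R_add0r : left_id 0%R Rplus. Proof. move=> *; ring. Qed.
Lemma R_addNr : left_inverse 0%R Ropp Rplus. Proof. move=> *; ring. Qed.
HB.instance Definition _ := GRing.isZmodule.Build R R_addrA R_addrC R_add0r R_addNr.

Lemma R_mulrA : associative Rmult. Proof. move=> *; ring. Qed.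
Lemma R_mulrC : commutative Rmult. Proof. move=> *; ring. Qed.
Lemma R_mul1r : left_id 1%R Rmult. Proof. move=> *; ring. Qed.
Lemma R_mulrDl : left_distributive Rmult Rplus. Proof. move=> *; ring. Qed.
Lemma R_one_neq0 : (1%R : R) != 0%R. Proof. by apply/ReqP; exact: R1_neq_R0. Qed.
HB.instance Definition _ := GRing.Zmodule_isComNzRing.Build R
  R_mulrA R_mulrC R_mul1r R_mulrDl R_one_neq0.

Lemma R_mulVf (x : R) : x != 0%R -> Rmult (Rinv x) x = 1%R.
Proof. by move/ReqP=> h; apply: Rinv_l. Qed.
Lemma R_invr0 : Rinv 0%R = 0%R. Proof. exact: Rinv_0. Qed.
HB.instance Definition _ := GRing.ComNzRing_isField.Build R R_mulVf R_invr0.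

Record cpx := Cx { Re : R; Im : R }.
Definition C_to_pair (z : cpx) : R * R := (Re z, Im z).
Definition pair_to_C (p : R * R) : cpx := Cx p.1 p.2.
Lemma C_pairK : cancel C_to_pair pair_to_C. Proof. by case. Qed.
HB.instance Definition _ := Equality.copy cpx (can_type C_pairK).
HB.instance Definition _ := Choice.copy cpx (can_type C_pairK).

Definition C0 : cpx := Cx 0%R 0%R.
Definition C1 : cpx := Cx 1%R 0%R.
Definition Cadd (z w : cpx) : cpx := Cx (Rplus (Re z) (Re w)) (Rplus (Im z) (Im w)).
Definition Copp (z : cpx) : cpx := Cx (Ropp (Re z)) (Ropp (Im z)).
Definition Cmul (z w : cpx) : cpx :=
  Cx (Rminus (Rmult (Re z) (Re w)) (Rmult (Im z) (Im w)))
     (Rplus (Rmult (Re z) (Im w)) (Rmult (Im z) (Re w))).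
Definition Cinv (z : cpx) : cpx :=
  let d := Rplus (Rmult (Re z) (Re z)) (Rmult (Im z) (Im z)) in
  Cx (Rdiv (Re z) d) (Ropp (Rdiv (Im z) d)).

Lemma C_ext (a b c d : R) : a = c -> b = d -> Cx a b = Cx c d.
Proof. by move=> -> ->. Qed.

Lemma C_addrA : associative Cadd. Proof. by case=> ? ? [? ?] [? ?]; apply: C_ext => /=; ring. Qed.
Lemma C_addrC : commutative Cadd. Proof. by case=> ? ? [? ?]; apply: C_ext => /=; ring. Qed.
Lemma C_add0r : left_id C0 Cadd. Proof. by case=> ? ?; apply: C_ext => /=; ring. Qed.
Lemma C_addNr : left_inverse C0 Copp Cadd. Proof. by case=> ? ?; apply: C_ext => /=; ring. Qed.
HB.instance Definition _ := GRing.isZmodule.Build cpx C_addrA C_addrC C_add0r C_addNr.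

Lemma C_mulrA : associative Cmul. Proof. by case=> ? ? [? ?] [? ?]; apply: C_ext => /=; ring. Qed.
Lemma C_mulrC : commutative Cmul. Proof. by case=> ? ? [? ?]; apply: C_ext => /=; ring. Qed.
Lemma C_mul1r : left_id C1 Cmul. Proof. by case=> ? ?; apply: C_ext => /=; ring. Qed.
Lemma C_mulrDl : left_distributive Cmul Cadd.
Proof. by case=> ? ? [? ?] [? ?]; apply: C_ext => /=; ring. Qed.
Lemma C_one_neq0 : C1 != C0.
Proof. by apply/eqP => -[] /R1_neq_R0. Qed.
HB.instance Definition _ := GRing.Zmodule_isComNzRing.Build cpx
  C_mulrA C_mulrC C_mul1r C_mulrDl C_one_neq0.

Lemma C_mulVf (z : cpx) : z != C0 -> Cmul (Cinv z) z = C1.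
Proof.
case: z => a b /eqP hz; rewrite /Cmul /Cinv /=.
have hd : Rplus (Rmult a a) (Rmult b b) <> 0%R.
  move=> h; apply: hz; have ha : a = 0%R by nra.
  have hb : b = 0%R by nra.
  by rewrite ha hb.
by apply: C_ext; field.
Qed.
Lemma C_invr0 : Cinv C0 = C0.
Proof. rewrite /Cinv /=; apply: C_ext; rewrite /Rdiv; ring. Qed.
HB.instance Definition _ := GRing.ComNzRing_isField.Build cpx C_mulVf C_invr0.

Definition RtoC (r : R) : cpx := Cx r 0%R.

Local Open Scope ring_scope.

Definition simple_graph (N : nat) (e : rel 'I_N) : Prop :=
  symmetric e /\ irreflexive e.
Definition connected_graph (N : nat) (e : rel 'I_N) : Prop :=
  forall i j : 'I_N, connect e i j.

Definition adjmx (N : nat) (e : rel 'I_N) : 'M[R]_N :=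
  \matrix_(i, j) (e i j)%:R.
Definition degmx (N : nat) (e : rel 'I_N) : 'M[R]_N :=
  \matrix_(i, j) ((i == j)%:R * #|[set k | e i k]|%:R).

Definition Gmx (N : nat) (e : rel 'I_N) : 'M[R]_N :=
  invmx (degmx e + 1%:M) *m (adjmx e + 1%:M).

Definition Gammamx (N : nat) (e : rel 'I_N) (g T : R) : 'M[R]_N :=
  exp (Rmult g T) *: 1%:M - (exp (Rmult g T) - 1) *: Gmx e.

Definition onesv (N : nat) : 'cV[R]_N := const_mx 1.

Definition deriv_within (f : R -> R) (D : R -> Prop) (l t : R) : Prop :=
  limit1_in (fun s => Rdiv (Rminus (f s) (f t)) (Rminus s t))
            (fun s => D s /\ s <> t) l t.

From Stdlib Require Import Reals Lra.
From HB Require Import structures.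
From mathcomp Require Import all_boot all_order all_algebra.
From mathcomp Require Import ring.
Import GRing.Theory.

Set Implicit Arguments.
Unset Strict Implicit.
Unset Printing Implicit Defensive.
Local Open Scope ring_scope.

(* Write s_i = d_i + 1 for the closed degree of node i and
   m_ij = a_ij + delta_ij for the entries of A + I, so that G_ij = m_ij / s_i and
   Gamma = c I - (c - 1) G with c = e^{gT} in (0, 1).

   A left eigenvector v of Gamma for mu gives, after the
   rescaling u_i = v_i / s_i, the "closed-neighbourhood equation"
   (c - 1) sum_i u_i m_ij = (c - mu) s_j u_j.  Since m is symmetric and
   nonnegative, with column sums s_j, such an equation forces the eigenvalue
   lam = (c - mu)/(c - 1) to be real (a symmetry argument on the real and
   imaginary parts) and of modulus at most 1 (look at a coordinate of maximal
   modulus); hence mu = c - (c - 1) lam lies in (2c - 1, 1] within (-1, 1].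
   For lam = 1 a maximum-principle argument along the connected graph shows u
   is constant, so the left fixed vectors of Gamma are multiples of (s_i)_i.
   A general criterion (conjugate by a shear sending e_0 to 1_N and expand
   along the first column) turns "Gamma 1 = 1 and no nonzero left fixed vector
   is orthogonal to 1" into "1 is a simple root of the characteristic
   polynomial".

   On [kT, (k+1)T) each coordinate solves the scalar ODE
   y' = g y - g K with K frozen, so (y - K) e^{-g(t - kT)} has zero derivative
   inside the interval; by continuity it takes the same value at both ends,
   which is exactly x((k+1)T) = Gamma x(kT). *)

(* The ring operations of R as a MathComp field are the Stdlib ones; these
   rewrite rules let Stdlib tactics (lra, nra) see through them. *)
Lemma RaddE (x y : R) : x + y = Rplus x y. Proof. by []. Qed.
Lemma RmulE (x y : R) : x * y = Rmult x y. Proof. by []. Qed.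
Lemma RoppE (x : R) : - x = Ropp x. Proof. by []. Qed.
Lemma R0E : (@GRing.zero _ : R) = R0. Proof. by []. Qed.
Lemma R1E : (@GRing.one _ : R) = R1. Proof. by []. Qed.
Ltac toR := rewrite ?RaddE ?RmulE ?RoppE ?R0E ?R1E.

Lemma natRE (n : nat) : (n%:R : R) = INR n.
Proof. by elim: n => [//|n IH]; rewrite -addn1 natrD IH plus_INR. Qed.

(* Order facts about finite sums of reals (R carries no MathComp order). *)

Lemma Rsum_abs_le (I : finType) (F : I -> R) :
  Rle (Rabs (\sum_i F i)) (\sum_i Rabs (F i)).
Proof.
apply: (big_ind2 (fun a b => Rle (Rabs a) b)) => [|x1 x2 y1 y2 h1 h2|i _].
- by rewrite Rabs_R0; apply: Rle_refl.
- by apply: Rle_trans (Rabs_triang _ _) _; apply: Rplus_le_compat.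
- exact: Rle_refl.
Qed.

Lemma Rsum_le (I : finType) (F G : I -> R) :
  (forall i, Rle (F i) (G i)) -> Rle (\sum_i F i) (\sum_i G i).
Proof.
move=> hFG; apply: (big_ind2 Rle) => [|*|i _]; last exact: hFG.
  exact: Rle_refl.
exact: Rplus_le_compat.
Qed.

Lemma Rsum_ge0 (I : finType) (P : pred I) (F : I -> R) :
  (forall i, Rle 0 (F i)) -> Rle 0 (\sum_(i | P i) F i).
Proof.
move=> hF; apply: (big_ind (Rle 0)) => [|*|i _]; last exact: hF.
  exact: Rle_refl.
exact: Rplus_le_le_0_compat.
Qed.

Lemma Rsum_gt0 (I : finType) (F : I -> R) j :
  (forall i, Rle 0 (F i)) -> Rlt 0 (F j) -> Rlt 0 (\sum_i F i).
Proof.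
move=> hF hj; rewrite (bigD1 j) //=.
have := Rsum_ge0 (fun i => i != j) hF.
set S := \sum_(i | i != j) F i; toR; lra.
Qed.

Lemma Rsum_nonneg_eq0 (I : finType) (F : I -> R) j :
  (forall i, Rle 0 (F i)) -> \sum_i F i = 0 -> F j = 0.
Proof.
move=> hF hsum; case: (Rle_lt_or_eq_dec _ _ (hF j)) => [hj|<-//].
by have := Rsum_gt0 hF hj; rewrite hsum => /Rlt_irrefl.
Qed.

Lemma Rargmax (I : finType) (f : I -> R) (i0 : I) :
  exists j, forall i, Rle (f i) (f j).
Proof.
suff [j _ hj] : exists2 j, j \in i0 :: enum I &
    forall i, i \in i0 :: enum I -> Rle (f i) (f j).
  by exists j => i; apply: hj; rewrite inE mem_enum orbT.
elim: (enum I) i0 => [|y s IH] x0.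
  by exists x0 => [|i]; rewrite ?inE // => /eqP ->; apply: Rle_refl.
have [j hj hmax] := IH y.
case: (Rle_lt_dec (f x0) (f j)) => hx.
  exists j => [|i]; first by rewrite inE hj orbT.
  by rewrite inE => /orP [/eqP ->|]; last exact: hmax.
exists x0 => [|i]; first by rewrite inE eqxx.
rewrite inE => /orP [/eqP ->|hi]; first exact: Rle_refl.
by apply: Rle_trans (hmax _ hi) _; lra.
Qed.

Section ClosedNeighbourhood.
Variables (N : nat) (e : rel 'I_N).

Definition cdeg (i : 'I_N) : R := #|[set k | e i k]|%:R + 1.
Definition cadj (i j : 'I_N) : R := (e i j)%:R + (i == j)%:R.

Lemma cdeg_gt0 i : Rlt 0 (cdeg i).
Proof. by rewrite /cdeg natRE; have := pos_INR #|[set k | e i k]|; toR; lra. Qed.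

Lemma cdeg_neq0 i : cdeg i != 0.
Proof. by apply/eqP => h; have := cdeg_gt0 i; rewrite h => /Rlt_irrefl. Qed.

Lemma cadj_ge0 i j : Rle 0 (cadj i j).
Proof. by rewrite /cadj !natRE; apply: Rplus_le_le_0_compat; apply: pos_INR. Qed.

Lemma GmxE i j : Gmx e i j = cadj i j / cdeg i.
Proof.
set S := degmx e + 1%:M; set Sinv : 'M[R]_N := diag_mx (\row_k (cdeg k)^-1).
have defS : S = diag_mx (\row_k cdeg k).
  apply/matrixP => a b; rewrite !mxE /cdeg.
  by case: eqP => [->|_] /=; rewrite ?mul1r ?mulr1n ?mul0r ?addr0 ?mulr0n.
have SinvS : Sinv *m S = 1%:M.
  rewrite defS; apply/matrixP => a b; rewrite mul_diag_mx !mxE.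
  by case: eqP => [->|_]; rewrite ?mulr0 ?mulr1n ?mulr0n // mulVf ?cdeg_neq0.
have S_unit : S \in unitmx by case: (mulmx1_unit SinvS).
have Sinv_invmx : invmx S = Sinv by rewrite -[invmx S]mul1mx -SinvS mulmxK.
by rewrite /Gmx -/S Sinv_invmx mul_diag_mx !mxE mulrC.
Qed.

Lemma GammamxE g T i j :
  Gammamx e g T i j =
  exp (Rmult g T) * (i == j)%:R - (exp (Rmult g T) - 1) * (cadj i j / cdeg i).
Proof. by rewrite /Gammamx -GmxE !mxE. Qed.

Hypothesis e_sym : symmetric e.

Lemma cadj_sym i j : cadj i j = cadj j i.
Proof. by rewrite /cadj e_sym eq_sym. Qed.

Lemma cadj_colsum j : \sum_i cadj i j = cdeg j.
Proof.
have delta_sum : \sum_i ((i == j)%:R : R) = 1.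
  by rewrite (bigD1 j) //= eqxx big1 ?addr0 // => i /negbTE ->.
rewrite /cadj big_split /= delta_sum /cdeg -natr_sum -sum1_card [in RHS]big_mkcond /=.
congr (_%:R + _).
by apply: eq_bigr => i _; rewrite inE e_sym; case: (e j i).
Qed.

Lemma cadj_rowsum i : \sum_j cadj i j = cdeg i.
Proof. by rewrite -cadj_colsum; apply: eq_bigr => j _; rewrite cadj_sym. Qed.

(* Closed-neighbourhood equations sum_i u_i m_ij = lam s_j u_j (the left
   eigen-equations of G after rescaling) have |lam| <= 1: evaluate at a
   coordinate where |u| is maximal and use that column j of m sums to s_j. *)
Lemma closed_eig_bound (U : 'I_N -> R) (lam : R) :
  (exists j, U j <> 0) ->
  (forall j, \sum_i U i * cadj i j = lam * cdeg j * U j) -> Rle (Rabs lam) 1.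
Proof.
move=> [j0 hj0] eqU.
have [j hj] := Rargmax (fun i => Rabs (U i)) j0.
have Uj_pos : Rlt 0 (Rabs (U j)) by apply: Rlt_le_trans (hj j0); apply: Rabs_pos_lt.
have sj_pos := cdeg_gt0 j.
have : Rle (Rabs (\sum_i U i * cadj i j)) (Rabs (U j) * cdeg j).
  apply: Rle_trans (Rsum_abs_le _) _.
  rewrite -cadj_colsum -RmulE mulr_sumr; apply: Rsum_le => i /=.
  rewrite !RmulE Rabs_mult (Rabs_pos_eq _ (cadj_ge0 i j)).
  exact: Rmult_le_compat_r (cadj_ge0 i j) (hj i).
rewrite eqU !RmulE !Rabs_mult (Rabs_pos_eq (cdeg j)); last lra.
move=> hle; apply: (Rmult_le_reg_r (Rmult (cdeg j) (Rabs (U j)))); nra.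
Qed.

(* For lam = 1 the rescaled vector is constant on a connected graph: the set
   where u attains its maximum is closed under adjacency. *)
Lemma closed_fixed_const (U : 'I_N -> R) :
  connected_graph e ->
  (forall j, \sum_i U i * cadj i j = cdeg j * U j) -> forall i k, U i = U k.
Proof.
move=> e_conn eqU i k.
have [j hj] := Rargmax U i.
have max_step x y : U x = U j -> e y x -> U y = U j.
  move=> hx hyx.
  have sum0 : \sum_i (U j - U i) * cadj i x = 0.
    under eq_bigr do rewrite mulrBl.
    by rewrite sumrB eqU -mulr_sumr cadj_colsum hx mulrC subrr.
  have m_pos : Rlt 0 (cadj y x).
    by rewrite /cadj hyx !natRE; have := pos_INR (y == x); toR; simpl INR; lra.
  have := @Rsum_nonneg_eq0 _ _ y _ sum0.
  have nonneg i' : Rle 0 ((U j - U i') * cadj i' x).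
    by toR; apply: Rmult_le_pos (cadj_ge0 _ _); have := hj i'; lra.
  move=> /(_ nonneg); toR => /Rmult_integral [|]; lra.
have closed_max : closed e [pred k | U k == U j].
  move=> x y hxy; rewrite !inE; apply/eqP/eqP => h.
    by apply: max_step h _; rewrite e_sym.
  exact: max_step h hxy.
have := closed_connect closed_max (e_conn j i).
have := closed_connect closed_max (e_conn j k).
by rewrite !inE eqxx => /esym/eqP -> /esym/eqP ->.
Qed.

(* Realness: if P + iQ satisfies a closed-neighbourhood equation with complex
   coefficient beta + i gamma (scaled by alpha), the symmetry of m forces
   gamma * sum_j s_j (P_j^2 + Q_j^2) = 0, hence gamma = 0. *)
Lemma closed_eig_real (alpha beta gamma : R) (P Q : 'I_N -> R) :
  (exists j, P j <> 0 \/ Q j <> 0) ->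
  (forall j, alpha * \sum_i P i * cadj i j =
             beta * cdeg j * P j + gamma * cdeg j * Q j) ->
  (forall j, alpha * \sum_i Q i * cadj i j =
             beta * cdeg j * Q j - gamma * cdeg j * P j) ->
  gamma = 0.
Proof.
move=> [j0 hj0] P_eq Q_eq.
have swap : \sum_j Q j * (\sum_i P i * cadj i j) =
            \sum_j P j * (\sum_i Q i * cadj i j).
  under eq_bigr do rewrite mulr_sumr.
  under [RHS]eq_bigr do rewrite mulr_sumr.
  rewrite exchange_big /=; apply: eq_bigr => a _; apply: eq_bigr => b _.
  by rewrite (cadj_sym a b); ring.
have energy0 : gamma * \sum_j cdeg j * (P j * P j + Q j * Q j) = 0.
  transitivity (alpha * (\sum_j Q j * (\sum_i P i * cadj i j) -
                         \sum_j P j * (\sum_i Q i * cadj i j))); last first.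
    by rewrite swap subrr mulr0.
  rewrite -sumrB !mulr_sumr; apply: eq_bigr => j _.
  by rewrite mulrBr (mulrCA alpha (Q j)) (mulrCA alpha (P j)) P_eq Q_eq; ring.
have energy_pos : Rlt 0 (\sum_j cdeg j * (P j * P j + Q j * Q j)).
  have sq_nonneg x : Rle 0 (Rmult x x) by nra.
  apply: (Rsum_gt0 (j := j0)) => [i|].
    by toR; apply: Rmult_le_pos; [apply: Rlt_le; apply: cdeg_gt0 | nra].
  have := cdeg_gt0 j0; toR => hs.
  by case: hj0 => /Rsqr_pos_lt; rewrite /Rsqr => h; nra.
move/eqP: energy0; rewrite mulf_eq0 => /orP [/eqP //|/eqP h].
by rewrite h in energy_pos; case: (Rlt_irrefl _ energy_pos).
Qed.

End ClosedNeighbourhood.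

Lemma cpx_left_eig_parts (N : nat) (M : 'M[R]_N) (v : 'rV[cpx]_N) (mu : cpx) :
  v *m map_mx RtoC M = mu *: v -> forall j,
  \sum_i Re (v 0 i) * M i j = Re mu * Re (v 0 j) - Im mu * Im (v 0 j) /\
  \sum_i Im (v 0 i) * M i j = Re mu * Im (v 0 j) + Im mu * Re (v 0 j).
Proof.
have Re_sum (F : 'I_N -> cpx) : Re (\sum_i F i) = \sum_i Re (F i).
  by apply: (big_morph Re) => //.
have Im_sum (F : 'I_N -> cpx) : Im (\sum_i F i) = \sum_i Im (F i).
  by apply: (big_morph Im) => //.
have ReM (x y : cpx) : Re (x * y) = Re x * Re y - Im x * Im y by [].
have ImM (x y : cpx) : Im (x * y) = Re x * Im y + Im x * Re y by [].
move=> hv j; move/matrixP/(_ 0 j): hv; rewrite !mxE => hj; split.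
- rewrite -[RHS]ReM -hj Re_sum; apply: eq_bigr => i _.
  by rewrite mxE ReM mulr0 subr0.
- rewrite -[RHS]ImM -hj Im_sum; apply: eq_bigr => i _.
  by rewrite mxE ImM mulr0 add0r.
Qed.

Lemma exp_gT_bounds (g T : R) : Rlt 0 T -> Rlt g 0 ->
  Rlt 0 (exp (Rmult g T)) /\ Rlt (exp (Rmult g T)) 1.
Proof.
move=> hT hg; split; first exact: exp_pos.
rewrite -exp_0; apply: exp_increasing.
have : Rlt 0 (Rmult (- g) T) by apply: Rmult_lt_0_compat; lra.
nra.
Qed.

Section Gamma.
Variables (N : nat) (e : rel 'I_N) (g T : R).
Local Notation c := (exp (Rmult g T)).
Local Notation Gamma := (Gammamx e g T).

Lemma Gamma_left_mul (p : 'I_N -> R) j :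
  \sum_i p i * Gamma i j = c * p j - (c - 1) * \sum_i (p i / cdeg e i) * cadj e i j.
Proof.
under eq_bigr do rewrite GammamxE mulrBr.
rewrite sumrB (bigD1 j) //= eqxx big1 ?addr0; last first.
  by move=> i /negbTE ->; rewrite mulr0n !mulr0.
rewrite mulr1n mulr1 mulrC mulr_sumr; congr (_ - _).
by apply: eq_bigr => i _; ring.
Qed.

Lemma Gamma_left_rescaled (U : 'I_N -> R) (r : R) j :
  \sum_i (cdeg e i * U i) * Gamma i j = r ->
  (c - 1) * \sum_i U i * cadj e i j = c * (cdeg e j * U j) - r.
Proof.
rewrite Gamma_left_mul => <-; rewrite opprB addrCA subrr addr0.
by congr (_ * _); apply: eq_bigr => i _; rewrite [_ * U i]mulrC mulfK ?cdeg_neq0.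
Qed.

Lemma Gamma_right_mul (v : 'cV[R]_N) i :
  (Gamma *m v) i ord0 = c * v i ord0 - (c - 1) * (Gmx e *m v) i ord0.
Proof. by rewrite /Gammamx mulmxBl -!scalemxAl mul1mx !mxE. Qed.

Hypothesis e_sym : symmetric e.

Lemma Gamma_ones : Gamma *m onesv N = onesv N.
Proof.
apply/matrixP => i k; rewrite !mxE.
under eq_bigr do rewrite [onesv N _ _]mxE GammamxE mulr1.
rewrite sumrB (bigD1 i) //= eqxx big1 ?addr0; last first.
  by move=> j /negbTE; rewrite eq_sym => ->; rewrite mulr0n mulr0.
rewrite mulr1n mulr1 -mulr_sumr.
under eq_bigr do rewrite mulrC.
by rewrite -mulr_sumr cadj_rowsum // mulVf ?cdeg_neq0 // mulr1 opprB addrCA subrr addr0.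
Qed.

Lemma Gamma_cdeg_left_fixed : (\row_j cdeg e j) *m Gamma = \row_j cdeg e j.
Proof.
apply/matrixP => a k; rewrite !mxE.
under eq_bigr do rewrite mxE.
rewrite Gamma_left_mul.
under eq_bigr do rewrite divff ?cdeg_neq0 // mul1r.
by rewrite cadj_colsum //; ring.
Qed.

Hypotheses (T_pos : Rlt 0 T) (g_neg : Rlt g 0).

Lemma closed_eig_range (mu : R) (U : 'I_N -> R) :
  (exists j, U j <> 0) ->
  (forall j, (c - 1) * \sum_i U i * cadj e i j = (c - mu) * cdeg e j * U j) ->
  Rlt (-1) mu /\ Rle mu 1.
Proof.
move=> U_nz U_eq; have [c_pos c_lt1] := exp_gT_bounds T_pos g_neg.
have c1_neq0 : c - 1 != 0 by apply/eqP; toR => h; lra.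
pose lam := (c - mu) / (c - 1).
have lam_le1 : Rle (Rabs lam) 1.
  apply: (closed_eig_bound e_sym U_nz) => j.
  by apply: (mulfI c1_neq0); rewrite U_eq /lam; field.
have def_mu : mu = c - lam * (c - 1) by rewrite /lam divfK // subKr.
move: def_mu; toR => ->.
have := Rle_abs lam; have := Rle_abs (- lam); rewrite Rabs_Ropp.
by split; nra.
Qed.

Lemma Gamma_eig_real_range (mu : cpx) :
  eigenvalue (map_mx RtoC Gamma) mu ->
  exists r : R, mu = RtoC r /\ Rlt (-1) r /\ Rle r 1.
Proof.
move=> /eigenvalueP [v hv v_nz].
pose P i := Re (v 0 i) / cdeg e i; pose Q i := Im (v 0 i) / cdeg e i.
have defRe j : Re (v 0 j) = cdeg e j * P j by rewrite mulrC divfK ?cdeg_neq0.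
have defIm j : Im (v 0 j) = cdeg e j * Q j by rewrite mulrC divfK ?cdeg_neq0.
have P_eq j : (c - 1) * \sum_i P i * cadj e i j =
              (c - Re mu) * cdeg e j * P j + Im mu * cdeg e j * Q j.
  have [+ _] := cpx_left_eig_parts hv j.
  under eq_bigr do rewrite defRe.
  by rewrite !defRe defIm => /Gamma_left_rescaled ->; ring.
have Q_eq j : (c - 1) * \sum_i Q i * cadj e i j =
              (c - Re mu) * cdeg e j * Q j - Im mu * cdeg e j * P j.
  have [_ +] := cpx_left_eig_parts hv j.
  under eq_bigr do rewrite defIm.
  by rewrite !defIm defRe => /Gamma_left_rescaled ->; ring.
have [j0 vj0] : exists j, v 0 j != 0.
  apply/existsP; apply: contraNT v_nz => /existsPn vz.
  by apply/eqP/matrixP => a b; rewrite (ord1 a) mxE; apply/eqP/negPn/vz.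
have PQ_nz : P j0 <> 0 \/ Q j0 <> 0.
  case: (Req_dec (P j0) 0) => hP; last by left.
  case: (Req_dec (Q j0) 0) => hQ; last by right.
  case/eqP: vj0; have -> : v 0 j0 = Cx (Re (v 0 j0)) (Im (v 0 j0)) by case: (v 0 j0).
  by rewrite defRe defIm hP hQ !mulr0.
have Im0 : Im mu = 0 := closed_eig_real e_sym (ex_intro _ j0 PQ_nz) P_eq Q_eq.
exists (Re mu); split; first by move: Im0; clear; case: mu => a b /= ->.
case: PQ_nz => [P_nz|Q_nz].
  apply: (closed_eig_range (ex_intro _ j0 P_nz)) => j.
  by rewrite P_eq Im0 !mul0r addr0.
apply: (closed_eig_range (ex_intro _ j0 Q_nz)) => j.
by rewrite Q_eq Im0 !mul0r subr0.
Qed.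

Lemma Gamma_left_fixed (z : 'rV[R]_N) : (0 < N)%N ->
  connected_graph e -> z *m Gamma = z -> exists a, forall i, z 0 i = a * cdeg e i.
Proof.
move=> N_gt0 e_conn hz; have [c_pos c_lt1] := exp_gT_bounds T_pos g_neg.
have c1_neq0 : c - 1 != 0 by apply/eqP; toR => h; lra.
pose U i := z 0 i / cdeg e i.
have defz i : z 0 i = cdeg e i * U i by rewrite mulrC divfK ?cdeg_neq0.
have U_eq j : \sum_i U i * cadj e i j = cdeg e j * U j.
  apply: (mulfI c1_neq0); move/matrixP/(_ 0 j): hz; rewrite mxE.
  under eq_bigr do rewrite defz.
  by rewrite defz => /Gamma_left_rescaled ->; ring.
exists (U (Ordinal N_gt0)) => i.
by rewrite defz (closed_fixed_const e_sym e_conn U_eq i (Ordinal N_gt0)) mulrC.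
Qed.

End Gamma.

Section SimpleEigenvalue.
Variables (F : fieldType) (n : nat).

Lemma char_poly_conj m (A P Pinv : 'M[F]_m) :
  Pinv *m P = 1%:M -> char_poly (Pinv *m A *m P) = char_poly A.
Proof.
move=> PinvP; rewrite /char_poly /char_poly_mx.
have defX : ('X%:M : 'M[{poly F}]_m) = map_mx polyC Pinv *m 'X%:M *m map_mx polyC P.
  by rewrite -mulmxA mul_scalar_mx -scalemxAr -map_mxM PinvP map_mx1 scalemx1.
rewrite !map_mxM {1}defX -mulmxBl -mulmxBr !det_mulmx mulrAC -det_mulmx.
by rewrite -map_mxM PinvP map_mx1 det1 mul1r.
Qed.

Lemma char_poly_col0 (B : 'M[F]_n.+1) : (forall i, B i ord0 = (i == ord0)%:R) ->
  char_poly B = ('X - 1%:P) * char_poly (row' ord0 (col' ord0 B)).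
Proof.
move=> B_col0; rewrite /char_poly (expand_det_col _ ord0) (bigD1 ord0) //=.
rewrite big1 ?addr0 => [|i /negbTE i_nz]; last first.
  by rewrite !mxE B_col0 i_nz mulr0n subr0 mul0r.
by rewrite /cofactor row'_col'_char_poly_mx !mxE B_col0 eqxx addn0 expr0 mul1r mulr1n.
Qed.

Lemma col0_left_fixed_lift (B : 'M[F]_n.+1) (w' : 'rV[F]_n) :
  (forall i, B i ord0 = (i == ord0)%:R) -> w' *m row' ord0 (col' ord0 B) = w' ->
  exists2 w : 'rV[F]_n.+1, w *m B = w &
    w 0 ord0 = 0 /\ forall k, w 0 (lift ord0 k) = w' 0 k.
Proof.
move=> B_col0 hw'.
pose w : 'rV[F]_n.+1 := \row_j (if unlift ord0 j is Some k then w' 0 k else 0).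
have w0 : w 0 ord0 = 0 by rewrite mxE unlift_none.
have wl k : w 0 (lift ord0 k) = w' 0 k by rewrite mxE liftK.
exists w => //; apply/matrixP => a k.
rewrite (ord1 a) [LHS]mxE big_ord_recl w0 mul0r add0r.
case: (unliftP ord0 k) => [k' ->|->].
  rewrite wl; move/matrixP/(_ 0 k'): hw'; rewrite !mxE => <-.
  by apply: eq_bigr => j _; rewrite wl !mxE.
rewrite w0; apply: big1 => j _.
by rewrite B_col0 eq_sym (negbTE (neq_lift ord0 j)) mulr0n mulr0.
Qed.

Definition e0col : 'cV[F]_n.+1 := \col_i (i == ord0)%:R.

Lemma row_mul_e0col (w : 'rV[F]_n.+1) : w *m e0col = (w 0 ord0)%:M.
Proof.
apply/matrixP => a b; rewrite (ord1 a) (ord1 b) !mxE (bigD1 ord0) //= big1 ?addr0.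
  by rewrite !mxE eqxx mulr1.
by move=> j /negbTE j_nz; rewrite !mxE j_nz mulr0.
Qed.

(* A shear I + (u - e_0) e_0^T is invertible and sends e_0 to any vector u
   with first coordinate 1. *)
Lemma shear_e0col (u : 'cV[F]_n.+1) : u ord0 ord0 = 1 ->
  exists P Pinv : 'M[F]_n.+1,
    [/\ Pinv *m P = 1%:M, P *m Pinv = 1%:M, P *m e0col = u & Pinv *m u = e0col].
Proof.
move=> u0; pose W := u - e0col; pose E := e0col^T.
have E_row (v : 'cV[F]_n.+1) : E *m v = (v ord0 ord0)%:M.
  by rewrite -[E *m v]trmxK trmx_mul trmxK row_mul_e0col tr_scalar_mx !mxE.
have EW : E *m W = 0 by rewrite E_row !mxE u0 eqxx subrr raddf0.
have Ee0 : E *m e0col = 1%:M by rewrite E_row mxE eqxx.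
have Eu : E *m u = 1%:M by rewrite E_row u0.
exists (1%:M + W *m E), (1%:M - W *m E); split.
- rewrite mulmxBl mul1mx mulmxDr mulmx1 -mulmxA (mulmxA E) EW.
  by rewrite mul0mx mulmx0 addr0 addrK.
- rewrite mulmxDl mul1mx mulmxBr mulmx1 -mulmxA (mulmxA E) EW.
  by rewrite mul0mx mulmx0 subr0 subrK.
- by rewrite mulmxDl mul1mx -mulmxA Ee0 mulmx1 addrC subrK.
- by rewrite mulmxBl mul1mx -mulmxA Eu mulmx1 opprB addrC subrK.
Qed.

Lemma mup1_char_poly (A : 'M[F]_n.+1) (u : 'cV[F]_n.+1) :
  u ord0 ord0 = 1 -> A *m u = u ->
  (forall z : 'rV[F]_n.+1, z *m A = z -> z *m u = 0 -> z = 0) ->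
  mup 1 (char_poly A) = 1%N.
Proof.
move=> u0 Au no_fixed.
have [P [Pinv] [PinvP PPinv Pe0 Pinvu]] := shear_e0col u0.
pose B := Pinv *m A *m P.
have B_col0 i : B i ord0 = (i == ord0)%:R.
  have Be0 : B *m e0col = e0col by rewrite /B -!mulmxA Pe0 Au Pinvu.
  have := congr1 (row i) Be0; rewrite row_mul row_mul_e0col => /matrixP/(_ 0 ord0).
  by rewrite !mxE eqxx mulr1n.
rewrite -(char_poly_conj A PinvP) -/B (char_poly_col0 B_col0) mulrC.
have minor_not1 : ~~ root (char_poly (row' ord0 (col' ord0 B))) 1.
  rewrite -eigenvalue_root_char; apply/eigenvalueP => -[w' hw' w'_nz].
  have [w wB [w0 wl]] := col0_left_fixed_lift B_col0 (etrans hw' (scale1r w')).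
  have z0 : w *m Pinv = 0.
    apply: no_fixed; last by rewrite -mulmxA Pinvu row_mul_e0col w0 raddf0.
    move: (congr1 (mulmx^~ Pinv) wB); rewrite /B !mulmxA -(mulmxA _ P) PPinv.
    by rewrite mulmx1.
  have w_0 : w = 0 by rewrite -[w]mulmx1 -PinvP mulmxA z0 mul0mx.
  by case/eqP: w'_nz; apply/matrixP => i k; rewrite (ord1 i) -wl w_0 !mxE.
by rewrite mupMr // -[X in mup _ X]expr1 mup_XsubCX eqxx.
Qed.

End SimpleEigenvalue.

(* 1 is a simple eigenvalue of Gamma: Gamma 1_N = 1_N, and a left fixed vector
   z = a (s_i)_i with z 1_N = a sum_i s_i = 0 must vanish. *)
Lemma Gamma_mup1 (N : nat) (e : rel 'I_N) (g T : R) :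
  (0 < N)%N -> symmetric e -> connected_graph e -> Rlt 0 T -> Rlt g 0 ->
  mup 1 (char_poly (Gammamx e g T)) = 1%N.
Proof.
case: N e => [//|n] e _ e_sym e_conn T_pos g_neg.
apply: (mup1_char_poly (u := onesv n.+1)); first by rewrite mxE.
  exact: Gamma_ones.
move=> z hz zu.
have [a za] := Gamma_left_fixed e_sym T_pos g_neg (ltn0Sn n) e_conn hz.
have sum0 : a * \sum_i cdeg e i = 0.
  move/matrixP/(_ 0 0): zu; rewrite !mxE => zu0.
  by rewrite -[RHS]zu0 mulr_sumr; apply: eq_bigr => i _; rewrite mxE mulr1 za.
have a0 : a = 0.
  move/eqP: sum0; rewrite mulf_eq0 => /orP [/eqP //|/eqP s0].
  have := Rsum_gt0 (fun i => Rlt_le _ _ (cdeg_gt0 e i)) (cdeg_gt0 e ord0).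
  by rewrite s0 => /Rlt_irrefl.
by apply/matrixP => i j; rewrite (ord1 i) za a0 mul0r mxE.
Qed.

Section SampledDataODE.
Local Open Scope R_scope.

Lemma limit1_in_sub (f : R -> R) (D1 D2 : R -> Prop) l x0 :
  (forall x, D2 x -> D1 x) -> limit1_in f D1 l x0 -> limit1_in f D2 l x0.
Proof.
move=> D21 lim eps eps_pos; have [alp [alp_pos H]] := lim eps eps_pos.
by exists alp; split => // x [/D21 hx hxt]; apply: H.
Qed.

Lemma deriv_within_interior (y : R -> R) a b l t :
  a < t -> t < b ->
  deriv_within y (fun s => a <= s /\ s < b) l t -> derivable_pt_lim y t l.
Proof.
move=> hat htb dy eps eps_pos; have [alp [alp_pos H]] := dy eps eps_pos.
have del_pos : 0 < Rmin alp (Rmin (t - a) (b - t)).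
  by apply: Rmin_pos => //; apply: Rmin_pos; lra.
exists (mkposreal _ del_pos) => h h_nz /= h_small.
have := Rmin_l alp (Rmin (t - a) (b - t)); have := Rmin_r alp (Rmin (t - a) (b - t)).
have := Rmin_l (t - a) (b - t); have := Rmin_r (t - a) (b - t).
have := Rabs_def2 _ _ h_small => h_bd *.
have := H (t + h); rewrite /dist /= /R_dist.
replace (t + h - t) with h by lra; apply; split; first split; lra.
Qed.

Lemma const_on_open (h : R -> R) a b :
  (forall t, a < t < b -> derivable_pt_lim h t 0) ->
  forall t1 t2, a < t1 < b -> a < t2 < b -> h t1 = h t2.
Proof.
move=> h'0.
suff key t1 t2 : a < t1 < b -> a < t2 < b -> t1 <= t2 -> h t1 = h t2.
  move=> t1 t2 ht1 ht2; case: (Rle_dec t1 t2) => t12; first exact: key.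
  by symmetry; apply: key => //; lra.
move=> ht1 ht2 t12.
have pr x : t1 < x < t2 -> derivable_pt h x by move=> hx; exists 0; apply: h'0; lra.
have cont x : t1 <= x <= t2 -> continuity_pt h x.
  by move=> hx; apply: derivable_continuous_pt; exists 0; apply: h'0; lra.
have der0 x (hx : t1 < x < t2) : derive_pt h x (pr x hx) = 0.
  rewrite /derive_pt; case: (pr x hx) => l hl /=.
  by apply: (uniqueness_limite h x) hl _; apply: h'0; lra.
by symmetry; apply: (null_derivative_loc h t1 t2 pr cont der0); lra.
Qed.

(* The integrating factor s |-> e^{-g(s - a)} of the equation y' = g y - g K. *)
Definition ifactor (g a s : R) : R := exp (- (g * (s - a))).

Lemma ifactor_deriv g a p : derivable_pt_lim (ifactor g a) p (ifactor g a p * - g).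
Proof.
have lin : derivable_pt_lim (fun s => - (g * (s - a))) p (- g).
  move=> eps eps_pos; exists (mkposreal 1 Rlt_0_1) => h h_nz _.
  replace ((- (g * (p + h - a)) - - (g * (p - a))) / h - - g) with 0.
    by rewrite Rabs_R0.
  by field_simplify; [nra | exact: h_nz].
exact: derivable_pt_lim_comp lin (derivable_pt_lim_exp _).
Qed.

Lemma ifactor_cont g a p : continuity_pt (ifactor g a) p.
Proof.
by apply: derivable_continuous_pt; exists (ifactor g a p * - g); apply: ifactor_deriv.
Qed.

Lemma continue_in_const_near (f : R -> R) D p C : continue_in f D p ->
  (forall del, 0 < del -> exists s, D s /\ p <> s /\ Rabs (s - p) < del /\ f s = C) ->
  f p = C.
Proof.
move=> f_cont near_C; case: (Req_dec (f p) C) => // f_neq.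
have gap : 0 < Rabs (f p - C) by apply: Rabs_pos_lt; lra.
have [alp [alp_pos H]] := f_cont _ gap.
have [s [hD [hps [hsp fs]]]] := near_C alp alp_pos.
have := H s; rewrite /dist /= /R_dist fs => H1.
by have := H1 (conj (conj hD hps) hsp); rewrite Rabs_minus_sym; lra.
Qed.

Lemma const_to_endpoints (h : R -> R) a b : 0 <= a -> a < b ->
  continue_in h (fun s => 0 <= s) a -> continue_in h (fun s => 0 <= s) b ->
  (forall t1 t2, a < t1 < b -> a < t2 < b -> h t1 = h t2) -> h a = h b.
Proof.
move=> a_ge0 ab cont_a cont_b h_const; pose m := (a + b) / 2.
have hm : a < m < b by rewrite /m; lra.
have near_endpoint p : p = a \/ p = b -> continue_in h (fun s => 0 <= s) p -> h p = h m.
  move=> p_end p_cont; apply: (continue_in_const_near p_cont) => del del_pos.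
  pose d := Rmin (del / 2) ((b - a) / 2).
  have := Rmin_l (del / 2) ((b - a) / 2); have := Rmin_r (del / 2) ((b - a) / 2).
  have d_pos : 0 < d by apply: Rmin_pos; lra.
  rewrite -/d => d_le1 d_le2.
  have [s [hs sp]] : exists s, a < s < b /\ Rabs (s - p) = d.
    case: p_end => ->; [exists (a + d) | exists (b - d)]; split; try lra.
      by replace (a + d - a) with d by lra; apply: Rabs_pos_eq; lra.
    by replace (b - d - b) with (- d) by lra; rewrite Rabs_Ropp; apply: Rabs_pos_eq; lra.
  exists s; split; first lra.
  split; first by case: p_end => ->; lra.
  by split; [lra | apply: h_const].
by rewrite (near_endpoint a) ?(near_endpoint b) //; [right | left].
Qed.

(* One sampling period: a continuous solution of y' = g y - g K on [a, b)
   satisfies y(b) = K + (y(a) - K) e^{g(b - a)}, since (y - K) e^{-g(s - a)}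
   has zero derivative on (a, b). *)
Lemma sampled_ode_step (y : R -> R) (a b K g : R) : 0 <= a -> a < b ->
  (forall t, 0 <= t -> continue_in y (fun s => 0 <= s) t) ->
  (forall t, a <= t -> t < b ->
     deriv_within y (fun s => a <= s /\ s < b) (g * y t - g * K) t) ->
  y b = K + (y a - K) * exp (g * (b - a)).
Proof.
move=> a_ge0 ab y_cont y_deriv; pose h s := (y s - K) * ifactor g a s.
have h_cont p : 0 <= p -> continue_in h (fun s => 0 <= s) p.
  move=> p_ge0; apply: limit_mul.
    apply: limit_minus; first exact: y_cont.
    exact: limit_free.
  by apply: limit1_in_sub (ifactor_cont g a p) => x [].
have h'0 t : a < t < b -> derivable_pt_lim h t 0.
  move=> [a_t t_b].
  have := deriv_within_interior a_t t_b (y_deriv t (Rlt_le _ _ a_t) t_b).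
  move=> /(derivable_pt_lim_minus _ _ _ _ _ ^~ (derivable_pt_lim_const K t)).
  move=> /(derivable_pt_lim_mult _ _ _ _ _ ^~ (ifactor_deriv g a t)).
  by rewrite /h /= /fct_cte; congr derivable_pt_lim; rewrite /minus_fct; nra.
have := const_to_endpoints a_ge0 ab (h_cont a a_ge0) (h_cont b ltac:(lra))
  (const_on_open h'0).
rewrite /h /ifactor; replace (- (g * (a - a))) with 0 by nra.
rewrite exp_0 Rmult_1_r exp_Ropp => hab.
have := exp_pos (g * (b - a)) => exp_pos'.
have -> : y b = (y b - K) * / exp (g * (b - a)) * exp (g * (b - a)) + K.
  by field_simplify; [nra | lra].
by rewrite -hab; nra.
Qed.

End SampledDataODE.

Theorem mainTheorem7 (N : nat) (e : rel 'I_N) (T g : R)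
  (hN : (0 < N)%nat) (hsimple : simple_graph e) (hconn : connected_graph e)
  (hT : Rlt 0 T) (hg : Rlt g 0) :
  (* every (complex) eigenvalue of Gamma is real and lies in (-1, 1] *)
  (forall mu : cpx, eigenvalue (map_mx RtoC (Gammamx e g T)) mu ->
     exists r : R, mu = RtoC r /\ Rlt (-1) r /\ Rle r 1)
  (* 1 is an eigenvalue of algebraic multiplicity one *)
  /\ eigenvalue (Gammamx e g T) 1
  /\ mup 1 (char_poly (Gammamx e g T)) = 1%N
  (* Gamma 1_N = 1_N *)
  /\ Gammamx e g T *m onesv N = onesv N
  (* sampled-data solutions satisfy x((k+1)T) = Gamma x(kT) *)
  /\ (forall x : R -> 'cV[R]_N,
        (forall (i : 'I_N) (t : R), Rle 0 t ->
           continue_in (fun s => x s i ord0) (fun s => Rle 0 s) t) ->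
        (forall (k : nat) (i : 'I_N) (t : R),
           Rle (Rmult (INR k) T) t -> Rlt t (Rmult (INR k.+1) T) ->
           deriv_within (fun s => x s i ord0)
             (fun s => Rle (Rmult (INR k) T) s /\ Rlt s (Rmult (INR k.+1) T))
             (g * x t i ord0 - g * (Gmx e *m x (Rmult (INR k) T)) i ord0) t) ->
        forall k : nat, x (Rmult (INR k.+1) T) = Gammamx e g T *m x (Rmult (INR k) T)).
Proof.
have [e_sym _] := hsimple.
split; first exact: Gamma_eig_real_range.
split.
  apply/eigenvalueP; exists (\row_j cdeg e j).
    by rewrite Gamma_cdeg_left_fixed // scale1r.
  by apply/eqP => /matrixP/(_ 0 (Ordinal hN)); rewrite !mxE; apply/eqP/cdeg_neq0.
split; first exact: Gamma_mup1.
split; first exact: Gamma_ones.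
move=> x x_cont x_deriv k; apply/matrixP => i j; rewrite (ord1 j) Gamma_right_mul.
have kT_ge0 : Rle 0 (Rmult (INR k) T) by apply: Rmult_le_pos; [apply: pos_INR | lra].
have kT_lt : Rlt (Rmult (INR k) T) (Rmult (INR k.+1) T) by rewrite S_INR; lra.
rewrite (sampled_ode_step kT_ge0 kT_lt (x_cont i) (x_deriv k i)).
have -> : Rminus (Rmult (INR k.+1) T) (Rmult (INR k) T) = T by rewrite S_INR; lra.
by toR; nra.
Qed.
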